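(* Consider a corpus and a set $\mathcal{A}$ of its documents, with all notation as described in the context. Fix a term $t$ with $c'(t,d_\mathcal{A})\neq 0$, and put $m=(|\mathcal{A}|-1)\,c'(t,d_\mathcal{A})$, so that $T'(t)=T(t)-m$; assume $T(t)>m$. Regard $\mathrm{aver}(\mathcal{A},\mathcal{D})$, given by the closed-form formula in the context, as a function of the single real variable $T(t)$. Every other quantity appearing in that formula ($N$, $N'$, $m$, $D(d)$ and $D'(d)$ for $d\in\mathcal{A}$, $D'(d_\mathcal{A})$, $T(s)$ and $T'(s)$ for terms $s\neq t$, and all summands of $e$ other than $T(t)\ln T(t)$) is treated as an independent constant, while $e$ and $T'(t)$ depend on $T(t)$ through their defining formulas. If $$(|\mathcal{A}|-1)\,D'(d_\mathcal{A}) \;<\; N\,\frac{\ln(T(t))-\ln(T(t)-m)}{\ln(T(t))+1},$$ then $$\frac{\partial\, \mathrm{aver}(\mathcal{A},\mathcal{D})}{\partial T(t)} < 0 .$$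
   Context: **Corpus.** A corpus $\mathcal{D}$ is a finite set of documents, and each document is a multiset (''bag of words'') of terms. Write $c(t,d)\ge 0$ for the number of times term $t$ occurs in document $d$. Define - $N=\sum_{t,d}c(t,d)$, - $T(t)=\sum_d c(t,d)$, - $D(d)=\sum_t c(t,d)$. **Entropy.** All logarithms are natural. The entropy of the data under the maximum-likelihood rank-one model, with $p(t)=T(t)/N$ and $q(d)=D(d)/N$, is $$E=-\Big(\sum_t p(t)\ln p(t)+\sum_d q(d)\ln q(d)\Big)=2\ln N-\frac{e}{N},$$ where $$e=\sum_t T(t)\ln T(t)+\sum_d D(d)\ln D(d).$$ **Collaboration.** For a set $\mathcal{A}\subseteq\mathcal{D}$ of documents, introduce a new document $d_\mathcal{A}$ with counts $$c'(t,d_\mathcal{A})=\min_{d\in\mathcal{A}}c(t,d).$$ Set $c'(t,d)=c(t,d)-c'(t,d_\mathcal{A})$ for $d\in\mathcal{A}$, and $c'(t,d)=c(t,d)$ for all other documents. Let $N'$, $T'$, $D'$ be defined from $c'$ in the same way that $N$, $T$, $D$ are defined from $c$. Then - $D'(d_\mathcal{A})=\sum_t c'(t,d_\mathcal{A})$, - $D'(d)=D(d)-D'(d_\mathcal{A})$ for $d\in\mathcal{A}$, - $T'(t)=T(t)-(|\mathcal{A}|-1)\,c'(t,d_\mathcal{A})$, - $N'=N-(|\mathcal{A}|-1)\,D'(d_\mathcal{A})$. Let $E'$ be the entropy of the maximum-likelihood rank-one model fitted to the counts $c'$. **The aver score.** The aver score is $\mathrm{aver}(\mathcal{A},\mathcal{D})=E-E'$.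 It equals $$\mathrm{aver}(\mathcal{A},\mathcal{D})=2\ln(N/N')+\frac{N-N'}{NN'}\,e-\frac{1}{N'}\sum_{s:\,c'(s,d_\mathcal{A})\neq0}\big(T(s)\ln T(s)-T'(s)\ln T'(s)\big)-\frac{1}{N'}\sum_{d\in\mathcal{A}}\big(D(d)\ln D(d)-D'(d)\ln D'(d)\big)+\frac{1}{N'}D'(d_\mathcal{A})\ln D'(d_\mathcal{A}).$$ *)

From HB Require Import structures.
From mathcomp Require Import all_boot all_order all_algebra.
From mathcomp Require Import all_classical all_reals all_analysis.
Set Implicit Arguments. Unset Strict Implicit. Unset Printing Implicit Defensive.
Import Order.TTheory GRing.Theory Num.Theory.
Local Open Scope ring_scope.

Section Corpus.
Variables (Term Doc : finType).
(* c d t = number of occurrences of term t in document d *)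
Variable c : Doc -> Term -> nat.
Variable A : {set Doc}.

Definition Ncorp : nat := (\sum_(d : Doc) \sum_(t : Term) c d t)%N.
Definition Tcnt (t : Term) : nat := (\sum_(d : Doc) c d t)%N.
Definition Dcnt (d : Doc) : nat := (\sum_(t : Term) c d t)%N.

(* c'(t, d_A) = min_{d in A} c(t,d)  (0 if A is empty) *)
Definition cA (t : Term) : nat :=
  match [pick d in A] with
  | Some d0 => \big[minn/c d0 t]_(d in A) c d t
  | None => 0%N
  end.

Definition cprime (d : Doc) (t : Term) : nat :=
  if d \in A then (c d t - cA t)%N else c d t.

(* quantities of the new corpus (old documents + the new document d_A) *)
Definition DA : nat := (\sum_(t : Term) cA t)%N.
Definition Dprime (d : Doc) : nat := (\sum_(t : Term) cprime d t)%N.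
Definition Tprime (t : Term) : nat := ((\sum_(d : Doc) cprime d t) + cA t)%N.
Definition Nprime : nat := ((\sum_(d : Doc) \sum_(t : Term) cprime d t) + DA)%N.

Definition mshift (t : Term) : nat := ((#|A| - 1) * cA t)%N.

Definition xlnx {R : realType} (y : R) : R := y * ln y.

(* The closed-form aver formula, regarded as a function of the real
   variable x standing for T(t); all other quantities are the constants
   of the corpus, while e and T'(t) = x - m depend on x. *)
Definition aver_T {R : realType} (t : Term) (x : R) : R :=
  let N : R := (Ncorp)%:R in
  let N' : R := (Nprime)%:R in
  let m : R := (mshift t)%:R in
  let e : R := \sum_(s : Term | s != t) xlnx (Tcnt s)%:R
               + \sum_(d : Doc) xlnx (Dcnt d)%:R + xlnx x in
  2 * ln (N / N') + (N - N') / (N * N') * e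
  - N'^-1 * (\sum_(s : Term | (cA s != 0%N) && (s != t))
                 (xlnx (Tcnt s)%:R - xlnx (Tprime s)%:R)
             + (xlnx x - xlnx (x - m)))
  - N'^-1 * \sum_(d in A) (xlnx (Dcnt d)%:R - xlnx (Dprime d)%:R)
  + N'^-1 * xlnx (DA)%:R.

End Corpus.

From HB Require Import structures.
From mathcomp Require Import all_boot all_order all_algebra.
From mathcomp Require Import all_classical all_reals all_analysis.
From mathcomp Require Import ring lra.
Import Order.TTheory GRing.Theory Num.Theory.
Local Open Scope ring_scope.
Set Implicit Arguments. Unset Strict Implicit.

(* As a function of x = T(t), only the summand x ln x of e and the summand
   x ln x - (x - m) ln (x - m) of the term sum vary, so the derivative of aver
   is (N - N')/(N N') (ln x + 1) - (ln x - ln (x - m))/N'.  Counting the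
   occurrences absorbed by d_A gives N - N' = (|A| - 1) D'(d_A), and the
   derivative becomes ((|A| - 1) D'(d_A) (ln x + 1) - N (ln x - ln (x - m)))
   / (N N'), whose numerator is negative exactly under the hypothesis. *)

Section Collaboration.
Variables (Term Doc : finType) (c : Doc -> Term -> nat) (A : {set Doc}).

Lemma cA_le_count t d : d \in A -> (cA c A t <= c d t)%N.
Proof.
move=> dA; rewrite /cA; case: pickP => [d0 _|/(_ d)]; last by rewrite dA.
by rewrite -minEnat; exact: (@bigmin_le_cond _ nat _ _ d (mem A)).
Qed.

Lemma cA_neq0_card_gt0 t : cA c A t != 0%N -> (0 < #|A|)%N.
Proof. by rewrite /cA; case: pickP => [d0 d0A _|//]; apply/card_gt0P; exists d0. Qed.

Lemma Tcnt_cprime t :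
  Tcnt c t = (\sum_d cprime c A d t + #|A| * cA c A t)%N.
Proof.
rewrite /Tcnt (eq_bigr (fun d => cprime c A d t + (d \in A) * cA c A t)%N).
  rewrite big_split /= -big_distrl /= -sum1_card; congr (_ + _ * _)%N.
  by rewrite [RHS]big_mkcond; apply: eq_bigr => d _; case: (d \in A).
move=> d _; rewrite /cprime; case: ifP => dA; last by rewrite addn0.
by rewrite mul1n subnK // cA_le_count.
Qed.

Lemma Ncorp_Nprime : (0 < #|A|)%N ->
  Ncorp c = (Nprime c A + (#|A| - 1) * DA c A)%N.
Proof.
move=> A_gt0; rewrite /Ncorp exchange_big /=.
under eq_bigr do rewrite -/(Tcnt c _) Tcnt_cprime.
rewrite big_split /= -big_distrr /= exchange_big /Nprime /DA.
by rewrite -(prednK A_gt0) subn1 /= mulSn addnA.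
Qed.

Lemma Nprime_gt0 t : cA c A t != 0%N -> (0 < Nprime c A)%N.
Proof.
by move=> cA_neq0; rewrite ltn_addl // /DA (bigD1 t) //= ltn_addr // lt0n.
Qed.

End Collaboration.

Lemma is_derive_xlnx {R : realType} (x : R) : 0 < x ->
  is_derive x 1 xlnx (ln x + 1).
Proof.
move=> x_gt0; have ln_der := is_derive1_ln x_gt0.
by apply: is_derive_eq; rewrite /GRing.scale /= divff ?gt_eqF //; ring.
Qed.

Lemma is_derive_xlnx_shift {R : realType} (m x : R) : 0 < x - m ->
  is_derive x 1 (fun y => xlnx (y - m)) (ln (x - m) + 1).
Proof.
move=> xm_gt0; rewrite -[ln _ + 1]mulr1.
apply: (is_derive1_comp (f := xlnx) (g := fun y => y - m)).
  exact: is_derive_xlnx.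
by apply: is_derive_eq; rewrite subr0.
Qed.

Lemma slope_lt0 {R : realFieldType} (N N' L G : R) : 0 < N' -> N' <= N ->
  (N - N') * L < N * G -> (N - N') / (N * N') * L - N'^-1 * G < 0.
Proof.
move=> N'_gt0 N'_le_N ineq; have N_gt0 : 0 < N by apply: lt_le_trans N'_le_N.
have -> : (N - N') / (N * N') * L - N'^-1 * G = ((N - N') * L - N * G) / (N * N').
  by field; rewrite !gt_eqF.
by rewrite pmulr_llt0 ?subr_lt0 // invr_gt0 mulr_gt0.
Qed.

Lemma is_derive_aver_T {R : realType} (Term Doc : finType)
  (c : Doc -> Term -> nat) (A : {set Doc}) (t : Term) (x : R) :
  let N : R := (Ncorp c)%:R in let N' : R := (Nprime c A)%:R in
  let m : R := (mshift c A t)%:R in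
  0 < x - m ->
  is_derive x 1 (aver_T c A t)
    ((N - N') / (N * N') * (ln x + 1) - N'^-1 * (ln x - ln (x - m))).
Proof.
move=> N N' m xm_gt0.
have x_gt0 : 0 < x by apply: lt_le_trans xm_gt0 _; rewrite lerBlDr lerDl ler0n.
(* the two derivatives below are found by [is_derive] instance resolution *)
have xlnx_der := is_derive_xlnx x_gt0.
have xlnx_shift_der := is_derive_xlnx_shift xm_gt0.
by apply: is_derive_eq; rewrite /GRing.scale /=; ring.
Qed.

Theorem theorem1 (R : realType) (Term Doc : finType) (c : Doc -> Term -> nat)
  (A : {set Doc}) (t : Term) :
  cA c A t != 0%N ->
  (mshift c A t < Tcnt c t)%N ->
  (((#|A| - 1) * DA c A)%N%:R : R) <
    (Ncorp c)%:R * (ln ((Tcnt c t)%:R : R) - ln ((Tcnt c t)%:R - (mshift c A t)%:R))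
      / (ln ((Tcnt c t)%:R : R) + 1) ->
  derivable (@aver_T _ _ c A R t) (Tcnt c t)%:R 1 /\
  derive1 (@aver_T _ _ c A R t) (Tcnt c t)%:R < 0.
Proof.
move=> cA_neq0 m_lt_T slope_ineq.
have xm_gt0 : 0 < ((Tcnt c t)%:R : R) - (mshift c A t)%:R by rewrite subr_gt0 ltr_nat.
have [aver_derivable aver_derive] := is_derive_aver_T xm_gt0.
split=> //; rewrite derive1E aver_derive.
have lnx1_gt0 : 0 < ln ((Tcnt c t)%:R : R) + 1.
  by rewrite ltr_wpDl // ln_ge0 // ler1n (leq_ltn_trans (leq0n _) m_lt_T).
rewrite ltr_pdivlMr // in slope_ineq.
have N_eq : (Ncorp c)%:R = (Nprime c A)%:R + ((#|A| - 1) * DA c A)%N%:R :> R.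
  by rewrite (Ncorp_Nprime c (cA_neq0_card_gt0 cA_neq0)) natrD.
apply: slope_lt0; first by rewrite ltr0n (Nprime_gt0 cA_neq0).
  by rewrite N_eq lerDl.
by rewrite N_eq addrC addKr -N_eq.
Qed.
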